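(* Let $\Phi$ be an $e$-dimensional formal group law over $k$, $m\in\mathbb N_{>0}\cup\{\infty\}$, and let $(K,\mathbb D)$ be a $\Phi[m]$-field. Then $[K:C_K]\le p^e$.
   Context: $k$ is a field of characteristic $p>0$. For a $k$-algebra $R$, $R[\bar v]:=R[X_1,\dots,X_e]/(X_1^{p^m},\dots,X_e^{p^m})$ ($R[[\bar X]]$ if $m=\infty$); $\bar w$ is a second $e$-tuple of $m$-truncated variables. $\Phi[m]\in(k[\bar v,\bar w])^e$ denotes the image of $\Phi(\bar X,\bar Y)$ under $X_i\mapsto v_i$, $Y_i\mapsto w_i$ ($\Phi[\infty]=\Phi$). An $m$-truncated $e$-dimensional HS-derivation on $R$ over $k$ is a family $(D_{\mathbf i}:R\to R)_{\mathbf i\in\{0,\dots,p^m-1\}^e}$ such that $r\mapsto\sum D_{\mathbf i}(r)\bar v^{\mathbf i}$ is a $k$-algebra homomorphism $R\to R[\bar v]$ with $D_{\mathbf 0}=\mathrm{id}$. For $F\in(k[\bar v,\bar w])^e$ it is an $F$-derivation if $\sum_{\mathbf i,\mathbf j}D_{\mathbf j}(D_{\mathbf i}(r))\bar v^{\mathbf i}\bar w^{\mathbf j}=\sum_{\mathbf i}D_{\mathbf i}(r)F(\bar v,\bar w)^{\mathbf i}$ for all $r$. An $F$-field is a field $K\supseteq k$ with an $F$-derivation $\mathbb D$. The field of constants is $C_K:=\bigcap_{l=1}^e\ker D_{\varepsilon_l}$, $\varepsilon_l$ the $l$-th unit vector. *)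

(* Multivariate (truncated) power series are modelled by
   their coefficient functions on multi-indices. *)
From HB Require Import structures.
From mathcomp Require Import all_boot all_order all_algebra.
Set Implicit Arguments. Unset Strict Implicit. Unset Printing Implicit Defensive.
Import GRing.Theory.
Local Open Scope ring_scope.

Definition mi (V : finType) := {ffun V -> nat}.
Definition mzero (V : finType) : mi V := [ffun _ => 0%N].
Definition meps (V : finType) (v : V) : mi V := [ffun u => nat_of_bool (u == v)].
Definition mle (V : finType) (b a : mi V) : bool := [forall v, (b v <= a v)%N].
Definition msub (V : finType) (a b : mi V) : mi V := [ffun v => (a v - b v)%N].
Definition mdeg (V : finType) (a : mi V) : nat := (\sum_v a v)%N.
Definition mlift (V : finType) (N : nat) (c : {ffun V -> 'I_N}) : mi V :=
  [ffun v => nat_of_ord (c v)].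

Definition sum_le (R : nmodType) (V : finType) (a : mi V) (F : mi V -> R) : R :=
  \sum_(c : {ffun V -> 'I_(mdeg a).+1} | mle (mlift c) a) F (mlift c).

(* Truncation level: m = Some n means exponents < p^n; m = None means
   untruncated power series (m = infinity). *)
Definition inrange (p : nat) (m : option nat) (V : finType) (a : mi V) : bool :=
  if m is Some n then [forall v, (a v < p ^ n)%N] else true.

Definition ts (V : finType) (R : Type) := mi V -> R.

Definition trunc (R : nmodType) p m (V : finType) (f : ts V R) : ts V R :=
  fun a => if inrange p m a then f a else 0.
Definition tone (R : pzSemiRingType) (V : finType) : ts V R :=
  fun a => if a == mzero V then 1 else 0.
Definition tmul (R : pzSemiRingType) p m (V : finType) (f g : ts V R) : ts V R :=
  fun a => if inrange p m a then sum_le a (fun b => f b * g (msub a b)) else 0.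
Definition tpow (R : pzSemiRingType) p m (V : finType) (f : ts V R) (n : nat)
  : ts V R := iter n (tmul p m f) (@tone R V).
Definition tprodpow (R : pzSemiRingType) p m (V W : finType)
  (F : W -> ts V R) (i : mi W) : ts V R :=
  foldr (fun w acc => tmul p m (tpow p m (F w) (i w)) acc) (@tone R V) (enum W).

Definition svar (R : pzSemiRingType) (V : finType) (v : V) : ts V R :=
  fun a => if a == meps v then 1 else 0.
Definition sren (R : nmodType) (W V : finType) (h : W -> V) (f : ts W R) : ts V R :=
  fun a => if [forall v, (v \notin codom h) ==> (a v == 0%N)]
           then f [ffun w => a (h w)] else 0.
(* f(g_w : w in W), for g_w with zero constant terms (only |i| <= |a| matter) *)
Definition ssubst (R : pzSemiRingType) (W V : finType) (f : ts W R)
  (g : W -> ts V R) : ts V R :=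
  fun a => \sum_(i : {ffun W -> 'I_(mdeg a).+1} | (mdeg (mlift i) <= mdeg a)%N)
             f (mlift i) * tprodpow 0 None g (mlift i) a.

Definition V2 (e : nat) := ('I_e + 'I_e)%type.
Definition V3 (e : nat) := ('I_e + 'I_e + 'I_e)%type.
Definition mpair (e : nat) (a b : mi 'I_e) : mi (V2 e) :=
  [ffun x => match x with inl l => a l | inr l => b l end].
Definition XY3 (e : nat) (w : V2 e) : V3 e :=
  match w with inl j => inl (inl j) | inr j => inl (inr j) end.
Definition YZ3 (e : nat) (w : V2 e) : V3 e :=
  match w with inl j => inl (inr j) | inr j => inr j end.

Definition formal_group_law (k : pzSemiRingType) (e : nat)
  (Phi : 'I_e -> ts (V2 e) k) : Prop :=
  (forall l a, Phi l (mpair a (mzero _)) = if a == meps l then 1 else 0) /\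
  (forall l b, Phi l (mpair (mzero _) b) = if b == meps l then 1 else 0) /\
  (forall l (a : mi (V3 e)),
     ssubst (Phi l) (fun w => match w with
                             | inl j => sren (@XY3 e) (Phi j)
                             | inr j => svar _ (inr j) end) a
   = ssubst (Phi l) (fun w => match w with
                             | inl j => svar _ (inl (inl j))
                             | inr j => sren (@YZ3 e) (Phi j) end) a).

(* m-truncated e-dimensional HS-derivation on K over k (k -> K via iota):
   r |-> sum_i D_i(r) v^i is a k-algebra hom K -> K[v] with D_0 = id. *)
Definition is_HS_derivation (k K : pzRingType) (iota : k -> K) (p : nat)
  (m : option nat) (e : nat) (D : mi 'I_e -> K -> K) : Prop :=
  (forall r, D (mzero _) r = r) /\
  (forall i, inrange p m i -> forall r s, D i (r + s) = D i r + D i s) /\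
  (forall i, inrange p m i -> forall r s,
       D i (r * s) = sum_le i (fun j => D j r * D (msub i j) s)) /\
  (forall i, inrange p m i -> forall c, D i (iota c) = if i == mzero _ then iota c else 0).

(* F-derivation condition with F = Phi[m]:
   sum_{i,j} D_j(D_i r) v^i w^j = sum_i D_i(r) F(v,w)^i, compared coefficientwise
   at v^a w^b.  For m = Some n the right-hand sum is over all i in
   {0..p^n-1}^e; for m = None (power series) the sum is over i with entries
   <= |a|+|b| (the other terms have zero coefficient at v^a w^b, since F has no
   constant term). *)
Definition is_Phi_m_derivation (k K : pzRingType) (iota : k -> K) (p : nat)
  (m : option nat) (e : nat) (Phi : 'I_e -> ts (V2 e) k)
  (D : mi 'I_e -> K -> K) : Prop :=
  is_HS_derivation iota p m D /\
  forall r (a b : mi 'I_e), inrange p m a -> inrange p m b ->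
    D b (D a r) =
    \sum_(i : {ffun 'I_e -> 'I_(if m is Some n then p ^ n else (mdeg a + mdeg b).+1)%N})
       D (mlift i) r *
       iota (tprodpow p m (fun l => trunc p m (Phi l)) (mlift i) (mpair a b)).

Definition constants (K : pzRingType) (e : nat) (D : mi 'I_e -> K -> K) (x : K) : Prop :=
  forall l : 'I_e, D (meps l) x = 0.

From HB Require Import structures.
From mathcomp Require Import all_boot all_order all_algebra.
Set Implicit Arguments. Unset Strict Implicit. Unset Printing Implicit Defensive.
Import GRing.Theory.
Local Open Scope ring_scope.

(* If n > p^e, the n vectors (D_a x_j)_a, a ranging over {0,...,p-1}^e, satisfy a
   nontrivial K-linear relation c.  Such relations are stable under every
   D_{eps_l}: in D_{eps_l}(D_a r) = sum_i D_i(r) [v^a w^{eps_l}] Phi(v,w)^i only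
   the i < p contribute, because Phi has no constant term and in characteristic
   p the series Phi_w^p has no monomial with all exponents < p.
   A relation of minimal support normalised to have a coefficient 1 is hence
   killed by all D_{eps_l}, i.e. has constant coefficients, and at a = 0 it is
   a nontrivial relation among the x_j over C_K. *)

Section MultiIndices.
Variable V : finType.
Implicit Types (a b d : mi V) (p : nat).

Lemma leq_mdeg a v : (a v <= mdeg a)%N.
Proof. by rewrite /mdeg (bigD1 v) //= leq_addr. Qed.

Lemma mle_msub a b : mle (msub a b) a.
Proof. by apply/forallP => v; rewrite ffunE leq_subr. Qed.

Lemma msubAC a b d : msub (msub a b) d = msub (msub a d) b.
Proof. by apply/ffunP => v; rewrite !ffunE subnAC. Qed.

Lemma mle_msub2 a b d :
  mle b a && mle d (msub a b) = [forall v, b v + d v <= a v]%N.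
Proof.
apply/andP/forallP => [[/forallP le_ba /forallP le_d] v | le_bd].
  by have := le_d v; rewrite ffunE leq_subRL.
split; apply/forallP => v; have := le_bd v.
  exact/leq_trans/leq_addr.
by rewrite ffunE => le_v; rewrite leq_subRL // (leq_trans _ le_v) ?leq_addr.
Qed.

Lemma mlift_inord N1 N2 (c : {ffun V -> 'I_N1}) : (forall v, c v < N2.+1)%N ->
  mlift ([ffun v => inord (c v)] : {ffun V -> 'I_N2.+1}) = mlift c.
Proof. by move=> lt_c; apply/ffunP => v; rewrite !ffunE inordK. Qed.

Lemma inrange_mle p m a b : mle b a -> inrange p m a -> inrange p m b.
Proof.
case: m => //= n /forallP le_ba /forallP lt_a; apply/forallP => v.
exact: leq_ltn_trans (le_ba v) (lt_a v).
Qed.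

Definition mlt p a := [forall v, a v < p]%N.

Lemma mlt_mle p a b : mle b a -> mlt p a -> mlt p b.
Proof.
move=> /forallP le_ba /forallP lt_a; apply/forallP => v.
exact: leq_ltn_trans (le_ba v) (lt_a v).
Qed.

Lemma mlt_inrange p m a : m <> Some 0%N -> mlt p a -> inrange p m a.
Proof.
case: m => [n|//] n_neq0 /forallP lt_a; apply/forallP => v.
have p_gt0 : (0 < p)%N by apply: leq_ltn_trans (lt_a v).
apply: leq_trans (lt_a v) _; rewrite -{1}(expn1 p) leq_pexp2l // lt0n.
by apply/eqP => n0; apply: n_neq0; rewrite n0.
Qed.

Lemma mlt_mzero p : (0 < p)%N -> mlt p (mzero V).
Proof. by move=> p_gt0; apply/forallP => v; rewrite ffunE. Qed.

Lemma mlt_meps p l : (1 < p)%N -> mlt p (meps l).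
Proof. by move=> p_gt1; apply/forallP => v; rewrite ffunE (leq_ltn_trans (leq_b1 _)). Qed.

Lemma meps_neq0 l : meps l != mzero V.
Proof. by apply/eqP => /ffunP /(_ l); rewrite !ffunE eqxx. Qed.

Lemma mlt_mlift p a : mlt p a -> exists t : {ffun V -> 'I_p}, mlift t = a.
Proof.
move=> /forallP lt_a; exists [ffun v => Ordinal (lt_a v)].
by apply/ffunP => v; rewrite !ffunE.
Qed.

End MultiIndices.
Section CoefficientSums.
Variables (R : nmodType) (V : finType).
Implicit Types (a : mi V) (F : mi V -> R).

Lemma sum_le_widen N a F : (forall v, a v <= N)%N ->
  sum_le a F = \sum_(c : {ffun V -> 'I_N.+1} | mle (mlift c) a) F (mlift c).
Proof.
move=> le_aN; pose toN (c : {ffun V -> 'I_(mdeg a).+1}) : {ffun V -> 'I_N.+1} :=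
  [ffun v => inord (c v)].
pose ofN (c : {ffun V -> 'I_N.+1}) : {ffun V -> 'I_(mdeg a).+1} := [ffun v => inord (c v)].
have lt_of_mle (M : nat) (c : {ffun V -> 'I_M}) v :
    mle (mlift c) a -> (c v <= a v)%N.
  by move=> /forallP /(_ v); rewrite ffunE.
rewrite /sum_le (reindex_onto ofN toN) => [|c le_ca]; last first.
  apply/ffunP => v; rewrite !ffunE; apply/val_inj => /=.
  have le_cv := lt_of_mle _ _ v le_ca.
  by rewrite !inordK // ?ltnS (leq_trans le_cv) // ?leq_mdeg // inordK ?ltnS ?(leq_trans le_cv).
apply: eq_big => c; last first.
  case/andP=> le_ca /eqP {2}<-; congr F; symmetry; apply: mlift_inord => v.
  by rewrite ltnS (leq_trans (lt_of_mle _ _ v le_ca)).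
apply/idP/idP => [/andP[le_ca /eqP <-]|le_ca].
  by rewrite mlift_inord // => v; rewrite ltnS (leq_trans (lt_of_mle _ _ v le_ca)).
have lt_c v : (c v < (mdeg a).+1)%N.
  by rewrite ltnS (leq_trans (lt_of_mle _ _ v le_ca)) ?leq_mdeg.
rewrite mlift_inord // le_ca /=; apply/eqP/ffunP => v; rewrite !ffunE.
by apply/val_inj; rewrite /= !inordK.
Qed.

Lemma sum_le_exchange N a (F : mi V -> mi V -> R) :
  \sum_(b : {ffun V -> 'I_N} | mle (mlift b) a)
     \sum_(d : {ffun V -> 'I_N} | mle (mlift d) (msub a (mlift b))) F (mlift b) (mlift d) =
  \sum_(d : {ffun V -> 'I_N} | mle (mlift d) a)
     \sum_(b : {ffun V -> 'I_N} | mle (mlift b) (msub a (mlift d))) F (mlift b) (mlift d).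
Proof.
have sum_if (P : bool) (Q : pred {ffun V -> 'I_N}) (X : {ffun V -> 'I_N} -> R) :
    (if P then \sum_(d | Q d) X d else 0) = \sum_d (if P && Q d then X d else 0).
  by case: P; rewrite ?big_mkcond //= big1.
rewrite big_mkcond [RHS]big_mkcond.
under eq_bigr => b _ do rewrite sum_if.
under [RHS]eq_bigr => d _ do rewrite sum_if.
rewrite exchange_big /=; apply: eq_bigr => d _; apply: eq_bigr => b _.
rewrite !mle_msub2; congr (if _ then _ else _); apply: eq_forallb => v.
by rewrite addnC.
Qed.

Lemma sum_le_nested N a (F : mi V -> mi V -> R) (G : mi V -> R) :
  (forall v, a v <= N)%N -> (forall b, mle b a -> G b = sum_le (msub a b) (F b)) ->
  sum_le a G = \sum_(b : {ffun V -> 'I_N.+1} | mle (mlift b) a)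
     \sum_(d : {ffun V -> 'I_N.+1} | mle (mlift d) (msub a (mlift b))) F (mlift b) (mlift d).
Proof.
move=> le_aN eq_G; rewrite (sum_le_widen (N := N)) //; apply: eq_bigr => b le_ba.
rewrite eq_G // (sum_le_widen (N := N)) // => v; rewrite ffunE.
exact: leq_trans (leq_subr _ _) (le_aN v).
Qed.

Lemma sum_le_meps l F : sum_le (meps l) F = F (mzero V) + F (meps l).
Proof.
rewrite (sum_le_widen (N := 1)) => [|v]; last by rewrite ffunE leq_b1.
pose c0 : {ffun V -> 'I_2} := [ffun _ => ord0].
pose c1 : {ffun V -> 'I_2} := [ffun v => if v == l then ord_max else ord0].
have c0E : mlift c0 = mzero V by apply/ffunP => v; rewrite !ffunE.
have c1E : mlift c1 = meps l by apply/ffunP => v; rewrite !ffunE; case: (v == l).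
have c10 : c1 != c0.
  by apply/eqP => /ffunP /(_ l); rewrite !ffunE eqxx => /(congr1 val).
rewrite (bigD1 c0) /=; last by rewrite c0E; apply/forallP => v; rewrite ffunE.
rewrite (bigD1 c1) /=; last by rewrite c1E c10 andbT; apply/forallP => v.
rewrite big1 ?addr0 ?c0E ?c1E // => c /andP [/andP [/forallP le_c c_neq0] c_neq1].
have c_off v : v != l -> c v = ord0.
  move=> vl; apply/val_inj/eqP; rewrite /= -leqn0.
  by have := le_c v; rewrite !ffunE (negbTE vl).
have [cl0 | cl_neq0] := eqVneq (c l) ord0.
  case/eqP: c_neq0; apply/ffunP => v; rewrite ffunE.
  by have [->|/c_off] := eqVneq v l.
case/eqP: c_neq1; apply/ffunP => v; rewrite ffunE.
have [->|/c_off //] := eqVneq v l; apply/val_inj.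
by move: cl_neq0; case: (c l) => -[|[|//]] //= lt_cl; rewrite -val_eqE.
Qed.

End CoefficientSums.

Section TruncatedSeries.
Variables (R : comPzSemiRingType) (p : nat) (m : option nat) (V : finType).
Implicit Types (f g h : ts V R) (a : mi V).

Lemma tmul_lcomm f g h a :
  tmul p m f (tmul p m g h) a = tmul p m g (tmul p m f h) a.
Proof.
rewrite {1 3}/tmul; case: ifP => // a_in.
have nested (u w : ts V R) :
    forall b, mle b a -> u b * tmul p m w h (msub a b) =
      sum_le (msub a b) (fun d => u b * w d * h (msub (msub a b) d)).
  move=> b le_ba; rewrite /tmul (inrange_mle (mle_msub a b) a_in) big_distrr /=.
  by apply: eq_bigr => d _; rewrite mulrA.
rewrite (sum_le_nested (leq_mdeg a) (nested f g)) (sum_le_nested (leq_mdeg a) (nested g f)).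
rewrite (sum_le_exchange _ _ (fun b d => f b * g d * h (msub (msub a b) d))).
apply: eq_bigr => d _; apply: eq_bigr => b _.
by rewrite msubAC [f _ * g _]mulrC.
Qed.

Lemma eq_tmulr f g g' a : g =1 g' -> tmul p m f g a = tmul p m f g' a.
Proof. by move=> eq_g; rewrite /tmul; case: ifP => // _; apply: eq_bigr => d _; rewrite eq_g. Qed.

Lemma tmul0r f g a : g =1 (fun _ => 0) -> tmul p m f g a = 0.
Proof.
move=> g0; rewrite /tmul; case: ifP => // _.
by rewrite /sum_le big1 // => d _; rewrite g0 mulr0.
Qed.

Lemma tmulZr f g c a : tmul p m f (fun b => c * g b) a = c * tmul p m f g a.
Proof.
rewrite /tmul; case: ifP => _; last by rewrite mulr0.
by rewrite /sum_le mulr_sumr; apply: eq_bigr => d _; rewrite mulrCA.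
Qed.

Definition euler (t : V) f : ts V R := fun a => (a t)%:R * f a.

Lemma euler_tmul t f g a :
  euler t (tmul p m f g) a = tmul p m (euler t f) g a + tmul p m f (euler t g) a.
Proof.
rewrite /euler /tmul; case: ifP => _; last by rewrite mulr0 addr0.
rewrite /sum_le -big_split mulr_sumr /=; apply: eq_bigr => c /forallP le_ca.
have := le_ca t; rewrite [msub _ _ t]ffunE => le_ct.
rewrite -{1}(subnKC le_ct) natrD mulrDl !mulrA [f _ * _%:R]mulrC.
by congr (_ * _ * _ + _); rewrite ffunE.
Qed.

Lemma euler_tpowS t g n a :
  euler t (tpow p m g n.+1) a = n.+1%:R * tmul p m (euler t g) (tpow p m g n) a.
Proof.
elim: n a => [|n IHn] a.
  rewrite /= euler_tmul (@tmul0r g) ?addr0 ?mul1r // => b.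
  rewrite /euler /tone; case: eqP => [->|_]; last by rewrite mulr0.
  by rewrite ffunE mul0r.
rewrite [tpow _ _ _ _.+2]/= euler_tmul (eq_tmulr _ _ IHn) tmulZr tmul_lcomm.
by rewrite -(addn1 n.+1) natrD mulrDl mul1r addrC.
Qed.

End TruncatedSeries.

Section FrobeniusVanishing.
Variables (R : idomainType) (p : nat) (m : option nat) (V : finType).
Hypothesis pcharRp : p \in [pchar R].
Implicit Types (f g h : ts V R) (c : mi V).

Lemma tmul_mlt0r f h :
  (forall c, mlt p c -> h c = 0) -> forall c, mlt p c -> tmul p m f h c = 0.
Proof.
move=> h0 c lt_c; rewrite /tmul; case: ifP => // _; rewrite /sum_le big1 // => b _.
by rewrite h0 ?mulr0 // (mlt_mle (mle_msub _ _) lt_c).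
Qed.

Lemma tmul_mlt0l f h :
  (forall c, mlt p c -> f c = 0) -> forall c, mlt p c -> tmul p m f h c = 0.
Proof.
move=> f0 c lt_c; rewrite /tmul; case: ifP => // _; rewrite /sum_le big1 // => b le_bc.
by rewrite f0 ?mul0r // (mlt_mle le_bc lt_c).
Qed.

(* By Euler's operator c_t (g^p)_c = p (...) = 0, and a nonzero c_t < p is
   prime to p; if c = 0 then (g^p)_0 = g_0^p = 0. *)
Lemma tpow_pchar_mlt0 g : g (mzero V) = 0 -> forall c, mlt p c -> tpow p m g p c = 0.
Proof.
move=> g0 c lt_c; have p_prime := pcharf_prime pcharRp.
have pE : p = p.-1.+1 by rewrite prednK // prime_gt0.
have [t ct_neq0 | c0] := pickP [pred t | c t != 0%N].
  have /eqP := euler_tpowS p m t g p.-1 c; rewrite -pE (pcharf0 pcharRp) mul0r.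
  rewrite mulf_eq0 -(dvdn_pcharf pcharRp) gtnNdvd ?lt0n //; last exact: (forallP lt_c).
  by move=> /eqP.
rewrite pE /= /tmul; case: ifP => // _; rewrite /sum_le big1 // => b /forallP le_bc.
suff -> : mlift b = mzero V by rewrite g0 mul0r.
apply/ffunP => v; rewrite [RHS]ffunE; apply/eqP; rewrite -leqn0.
by have := le_bc v; have /negbFE/eqP <- := c0 v.
Qed.

Lemma tpow_mlt0 g n : g (mzero V) = 0 -> (p <= n)%N ->
  forall c, mlt p c -> tpow p m g n c = 0.
Proof.
move=> g0; elim: n => [|n IHn].
  by rewrite leqn0 => /eqP p0; have := pcharf_prime pcharRp; rewrite p0.
rewrite leq_eqVlt => /predU1P [<-|]; first exact: tpow_pchar_mlt0.
by rewrite ltnS => /IHn; apply: tmul_mlt0r.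
Qed.

Lemma tprodpow_mlt0 (W : finType) (F : W -> ts V R) (i : mi W) w :
  (forall w, F w (mzero V) = 0) -> (p <= i w)%N ->
  forall c, mlt p c -> tprodpow p m F i c = 0.
Proof.
move=> F0 le_pi; rewrite /tprodpow; have : w \in enum W by rewrite mem_enum.
elim: (enum W) => //= w' s IHs; rewrite in_cons => /predU1P [<-|w_s].
  by apply: tmul_mlt0l; apply: tpow_mlt0.
by apply: tmul_mlt0r; apply: IHs.
Qed.

End FrobeniusVanishing.

Lemma mlt_mpair e p (a b : mi 'I_e) : mlt p a -> mlt p b -> mlt p (mpair a b).
Proof.
by move=> /forallP lt_a /forallP lt_b; apply/forallP => -[v|v]; rewrite ffunE.
Qed.

Lemma fgl_mzero (k : pzSemiRingType) e (Phi : 'I_e -> ts (V2 e) k) :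
  formal_group_law Phi -> forall l, Phi l (mzero (V2 e)) = 0.
Proof.
move=> [PhiX0 _] l; have -> : mzero (V2 e) = mpair (mzero _) (mzero _).
  by apply/ffunP => -[v|v]; rewrite !ffunE.
by rewrite PhiX0 eq_sym (negbTE (meps_neq0 l)).
Qed.

Section HSDerivation.
Variables (k K : pzRingType) (iota : {rmorphism k -> K}) (p : nat) (m : option nat).
Variables (e : nat) (D : mi 'I_e -> K -> K) (l : 'I_e).
Hypotheses (HS : is_HS_derivation iota p m D) (l_in : inrange p m (meps l)).

Lemma HS_meps0 : D (meps l) 0 = 0.
Proof.
have [_ [D_add _]] := HS; apply: (@addrI _ (D (meps l) 0)).
by rewrite -D_add // !addr0.
Qed.

Lemma HS_meps_sum n (F : 'I_n -> K) :
  D (meps l) (\sum_(j < n) F j) = \sum_(j < n) D (meps l) (F j).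
Proof. by have [_ [D_add _]] := HS; exact: (big_morph _ (D_add _ l_in) HS_meps0). Qed.

Lemma HS_mepsM r s : D (meps l) (r * s) = r * D (meps l) s + D (meps l) r * s.
Proof.
have [D0 [_ [D_mul _]]] := HS; rewrite D_mul // sum_le_meps.
have -> : msub (meps l) (mzero _) = meps l by apply/ffunP => v; rewrite !ffunE subn0.
have -> : msub (meps l) (meps l) = mzero _ by apply/ffunP => v; rewrite !ffunE subnn.
by rewrite !D0.
Qed.

Lemma HS_meps1 : D (meps l) 1 = 0.
Proof.
have [_ [_ [_ D_iota]]] := HS.
by have := D_iota _ l_in 1; rewrite rmorph1 (negbTE (meps_neq0 l)).
Qed.

End HSDerivation.

Definition derivative_relation (K : pzRingType) p e (D : mi 'I_e -> K -> K) n
    (x : 'I_n -> K) (c : 'I_n -> K) :=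
  forall a, mlt p a -> \sum_(j < n) c j * D a (x j) = 0.

Lemma derivative_relationZ (K : comPzRingType) p e (D : mi 'I_e -> K -> K) n
    (x c : 'I_n -> K) s :
  derivative_relation p D x c -> derivative_relation p D x (fun j => c j * s).
Proof.
move=> rel_c a lt_a; under eq_bigr => j _ do rewrite mulrAC.
by rewrite -mulr_suml rel_c // mul0r.
Qed.

Section DerivativeRelations.
Variables (k : idomainType) (K : comPzRingType) (iota : {rmorphism k -> K}).
Variables (p : nat) (m : option nat) (e : nat) (Phi : 'I_e -> ts (V2 e) k).
Variable D : mi 'I_e -> K -> K.
Hypotheses (pcharkp : p \in [pchar k]) (m_neq0 : m <> Some 0%N).
Hypotheses (Phi0 : forall l, Phi l (mzero _) = 0) (PhiD : is_Phi_m_derivation iota p m Phi D).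

Lemma derivative_relation_closed l n (x c : 'I_n -> K) :
  derivative_relation p D x c ->
  derivative_relation p D x (fun j => D (meps l) (c j)).
Proof.
have p_gt1 := prime_gt1 (pcharf_prime pcharkp).
have [HS D_comp] := PhiD; have l_in := mlt_inrange m_neq0 (mlt_meps l p_gt1).
move=> rel_c a lt_a; have a_in := mlt_inrange m_neq0 lt_a.
have := congr1 (D (meps l)) (rel_c a lt_a); rewrite (HS_meps0 HS l_in) (HS_meps_sum HS l_in).
under eq_bigr => j _ do rewrite (HS_mepsM HS l_in).
rewrite big_split /=; suff -> : \sum_j c j * D (meps l) (D a (x j)) = 0 by rewrite add0r.
under eq_bigr => j _ do rewrite D_comp // big_distrr.
rewrite exchange_big big1 //= => i _.
under eq_bigr => j _ do rewrite mulrA mulrC.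
rewrite -big_distrr /=; case lt_i: (mlt p (mlift i)); first by rewrite rel_c // mulr0.
move/negbT: lt_i; rewrite negb_forall => /existsP [w]; rewrite -leqNgt => le_pi.
rewrite (tprodpow_mlt0 _ _ _ le_pi) ?rmorph0 ?mul0r //.
  by move=> w'; rewrite /trunc Phi0; case: ifP.
exact: mlt_mpair (mlt_meps l p_gt1).
Qed.

End DerivativeRelations.

Lemma constant_vector_closed (K : fieldType) (L : finType) (delta : L -> K -> K) n
    (P : ('I_n -> K) -> Prop) :
  (forall l, delta l 0 = 0) -> (forall l, delta l 1 = 0) ->
  (forall c s, P c -> P (fun j => c j * s)) ->
  (forall c l, P c -> P (fun j => delta l (c j))) ->
  forall c, P c -> (exists j, c j != 0) ->
  exists2 c', P c' & (exists j, c' j != 0) /\ forall l j, delta l (c' j) = 0.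
Proof.
move=> delta0 delta1 PZ Pdelta c Pc [j cj_neq0].
have [s] := ubnP #|[pred i | c i != 0]|.
elim: s c Pc j cj_neq0 => // s IHs c Pc j cj_neq0 supp_c.
pose c' i := c i / c j; have Pc' : P c' := PZ c _ Pc.
have c'j : c' j = 1 by rewrite /c' divff.
have [[l i] /= dli_neq0 | const] := pickP [pred li : L * 'I_n | delta li.1 (c' li.2) != 0].
  apply: (IHs _ (Pdelta c' l Pc') i dli_neq0).
  rewrite ltnS in supp_c; apply: leq_trans supp_c.
  apply: (@leq_trans #|[pred i | c' i != 0]|); last first.
    apply: subset_leq_card; apply/subsetP => i'; rewrite !inE /c'.
    by apply: contraNneq => ->; rewrite mul0r.
  apply: proper_card; apply/properP; split.
    by apply/subsetP => i'; rewrite !inE; apply: contraNneq => ->; rewrite delta0.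
  by exists j; rewrite !inE c'j ?oner_eq0 // delta1 eqxx.
exists c' => //; split; first by exists j; rewrite c'j oner_eq0.
by move=> l i; apply/eqP/negbFE; apply: (const (l, i)).
Qed.

Lemma exists_nontrivial_relation (K : fieldType) n N (v : 'I_n -> 'I_N -> K) :
  (N < n)%N ->
  exists2 c : 'I_n -> K, (exists j, c j != 0) & forall q, \sum_(j < n) c j * v j q = 0.
Proof.
move=> lt_Nn; pose M := \matrix_(j, q) v j q.
have /rowV0Pn [u /sub_kermxP uM0 /rV0Pn [j uj_neq0]] : kermx M != 0.
  rewrite kermx_eq0 /row_free; apply: contraTneq (rank_leq_col M) => ->.
  by rewrite -ltnNge.
exists (fun j => u 0 j); first by exists j.
move=> q; have /matrixP /(_ 0 q) := uM0; rewrite !mxE => uMq.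
by rewrite -[RHS]uMq; apply: eq_bigr => j' _; rewrite mxE.
Qed.


Theorem lemma2p19 (k K : fieldType) (p : nat) (hp : p \in [pchar k])
  (iota : {rmorphism k -> K}) (e : nat) (Phi : 'I_e -> ts (V2 e) k)
  (hPhi : formal_group_law Phi) (m : option nat) (hm : m <> Some 0%N)
  (D : mi 'I_e -> K -> K) (hD : is_Phi_m_derivation iota p m Phi D) :
  forall (n : nat) (x : 'I_n -> K),
    (forall c : 'I_n -> K, (forall j, constants D (c j)) ->
       \sum_(j < n) c j * x j = 0 -> forall j, c j = 0) ->
    (n <= p ^ e)%N.
Proof.
move=> n x indep; have p_prime := pcharf_prime hp.
have [HS _] := hD; have [D0 _] := HS.
have l_in (l : 'I_e) := mlt_inrange hm (mlt_meps l (prime_gt1 p_prime)).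
rewrite leqNgt; apply/negP => lt_pe_n.
pose T := {ffun 'I_e -> 'I_p}.
have lt_T_n : (#|{: T}| < n)%N by rewrite card_ffun !card_ord.
have [c c_neq0 rel_c] := exists_nontrivial_relation
  (fun j (q : 'I_#|{: T}|) => D (mlift (enum_val q)) (x j)) lt_T_n.
have Pc : derivative_relation p D x c.
  move=> a /mlt_mlift [t <-]; rewrite -[RHS](rel_c (enum_rank t)).
  by apply: eq_bigr => j _; rewrite enum_rankK.
have [c' Pc' [[j c'j_neq0] const]] :=
  constant_vector_closed (delta := fun l => D (meps l))
  (fun l => HS_meps0 HS (l_in l)) (fun l => HS_meps1 HS (l_in l))
  (derivative_relationZ (x := x))
  (fun c l => derivative_relation_closed hp hm (fgl_mzero hPhi) hD l (c := c)) Pc c_neq0.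
apply/negP: c'j_neq0; apply/negPn/eqP; apply: indep j => [j' l|]; first exact: const.
have := Pc' _ (mlt_mzero _ (prime_gt0 p_prime)).
by under eq_bigr => j' _ do rewrite D0.
Qed.
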